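(* Suppose $d=3$ and let $\Pi\subseteq\Sigma$. The cones $\sigma^1_\Pi$ and $\sigma^2_\Pi$ intersect nontrivially (i.e. $\sigma^1_\Pi\cap\sigma^2_\Pi\ne\{0\}$) if and only if $\Pi$ consists of more than one interval. In that case $\sigma_\Pi=N_\mathbb{R}$.
   Context: $N\cong\mathbb{Z}^3$, $\sigma\subset N_\mathbb{R}$ a strongly convex rational polyhedral cone of dimension $3$, $\Sigma=\sigma(1)$ its set of rays with primitive generators $n(\rho)$. The rays carry a cyclic order in which two rays are adjacent iff they span a $2$-dimensional face of $\sigma$ (equivalently, the cyclic order of the vertices $\rho\cap H$ of the polygon $\sigma\cap H$ for an affine hyperplane $H$ meeting $\sigma$ in a bounded polygon). ''$\Pi$ consists of more than one interval'' means that $\Pi$, viewed as a set of vertices of this cycle, decomposes into more than one maximal block of cyclically consecutive rays. $\sigma^1_\Pi=\operatorname{cone}(n(\rho):\rho\in\Pi)$, $\sigma^2_\Pi=\operatorname{cone}(n(\rho):\rho\in\Sigma\setminus\Pi)$, and $\sigma_\Pi=\operatorname{cone}(-n(\rho):\rho\in\Pi;\ n(\rho):\rho\in\Sigma\setminus\Pi)$, all cones over $\mathbb{R}_{\ge0}$. *)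

(* N = Z^3 realized as 'rV[int]_3, N_R = 'rV[R]_3, R : realType. *)
From HB Require Import structures.
From mathcomp Require Import all_boot all_order all_algebra.
From mathcomp Require Import reals.
Set Implicit Arguments. Unset Strict Implicit. Unset Printing Implicit Defensive.
Import Order.TTheory GRing.Theory Num.Theory.
Local Open Scope ring_scope.

Definition realize (R : realType) (w : 'rV[int]_3) : 'rV[R]_3 :=
  \row_j ((w 0 j)%:~R : R).

(* standard pairing M_R x N_R -> R *)
Definition dot (R : realType) (u x : 'rV[R]_3) : R := \sum_(j < 3) u 0 j * x 0 j.

Definition cone (R : realType) (k : nat) (S : {set 'I_k}) (g : 'I_k -> 'rV[R]_3)
    (x : 'rV[R]_3) : Prop :=
  exists c : 'I_k -> R, (forall i, 0 <= c i) /\ x = \sum_(i in S) c i *: g i.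

Definition face_set (R : realType) (k : nat) (g : 'I_k -> 'rV[R]_3) (S : {set 'I_k}) : Prop :=
  exists u : 'rV[R]_3, (forall i, 0 <= dot u (g i)) /\
                        (forall i, dot u (g i) = 0 <-> i \in S).

(* n : 'I_k -> N lists the primitive ray generators of a strongly convex rational
   polyhedral cone sigma of dimension 3, indexed in the cyclic order of the rays
   (i adjacent to ordS i). *)
Definition cyclic_ray_data (R : realType) (k : nat) (n : 'I_k -> 'rV[int]_3) : Prop :=
  let v := fun i => realize R (n i) in
  (forall i (d : int), (forall j, (d %| n i ord0 j)%Z) -> `|d| = 1) /\
  (forall x, cone setT v x -> cone setT v (- x) -> x = 0) /\
  (* dimension 3: sigma spans N_R *)
  (forall x : 'rV[R]_3, exists c : 'I_k -> R, x = \sum_i c i *: v i) /\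
  (* each n i spans a ray (1-dim face) of sigma; distinct i give distinct rays,
     and since sigma = cone(n i), every ray of sigma is among them *)
  (forall i, face_set v [set i]) /\
  (* cyclic order: distinct rays are adjacent iff they span a 2-dim face *)
  (forall i j, i != j -> (face_set v [set i; j] <-> (j = ordS i \/ i = ordS j))).

(* number of maximal blocks of cyclically consecutive indices of Pi *)
Definition num_intervals (k : nat) (Pi : {set 'I_k}) : nat :=
  if Pi == setT then 1%N else #|[set i in Pi | ord_pred i \notin Pi]|.

Definition signed_gens (R : realType) (k : nat) (n : 'I_k -> 'rV[int]_3)
    (Pi : {set 'I_k}) (i : 'I_k) : 'rV[R]_3 :=
  if i \in Pi then - realize R (n i) else realize R (n i).

From HB Require Import structures.
From mathcomp Require Import all_boot all_order all_algebra.
From mathcomp Require Import reals.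
From mathcomp Require Import ring lra zify.
Import Order.TTheory GRing.Theory Num.Theory.
Local Open Scope ring_scope.

Set Implicit Arguments. Unset Strict Implicit. Unset Printing Implicit Defensive.

(* Every ray n_i and every edge {n_i, n_{i+1}} of sigma is cut out by a
   supporting functional.  Comparing det(n_i, n_{i+1}, -) with the functional
   of the edge shows that det(n_i, n_{i+1}, n_{i+2}) never changes sign, and a
   fan argument around n_p then gives det(n_p, n_q, n_r) the same sign for all
   p < q < r.
   If Pi is a single cyclic interval {a, ..., a+r-1}, the plane through n_a and
   n_{a+r-1} (or the ray functional of n_a when r = 1) is <= 0 on Pi and > 0
   off Pi, so the two cones meet only in 0.  Otherwise there are
   p0 < p1 < p2 < p3 alternately in and out of Pi, and Cramer's rule yields
   A n_p0 + C n_p2 = B n_p1 + D n_p3 with A, B, C, D > 0: this is a nonzero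
   point of both cones, and a positive circuit of four signed generators, three
   of them independent, so the signed generators span N_R as a cone. *)

Section Determinant.
Variable R : realType.
Implicit Types (a b c p x y z f u : 'rV[R]_3) (s t : R).

Definition cross a b : 'rV[R]_3 :=
  \row_j (if j == 0 then a 0 1 * b 0 2 - a 0 2 * b 0 1
          else if j == 1 then a 0 2 * b 0 0 - a 0 0 * b 0 2
          else a 0 0 * b 0 1 - a 0 1 * b 0 0).

Definition det3 a b x := dot (cross a b) x.

Lemma ord3P (j : 'I_3) : [\/ j = 0, j = 1 | j = 2].
Proof.
by case: j => -[|[|[|]]] // ?; [constructor 1|constructor 2|constructor 3];
  apply/val_inj.
Qed.

Lemma dotE u x : dot u x = u 0 0 * x 0 0 + u 0 1 * x 0 1 + u 0 2 * x 0 2.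
Proof.
rewrite /dot !big_ord_recl big_ord0 addr0 addrA.
by congr (_ * _ + _ * _ + _ * _); congr (_ _ _); apply/val_inj.
Qed.

Lemma det3E a b x : det3 a b x =
  (a 0 1 * b 0 2 - a 0 2 * b 0 1) * x 0 0 +
  (a 0 2 * b 0 0 - a 0 0 * b 0 2) * x 0 1 +
  (a 0 0 * b 0 1 - a 0 1 * b 0 0) * x 0 2.
Proof. by rewrite /det3 dotE !mxE. Qed.

Lemma dotDr u x y : dot u (x + y) = dot u x + dot u y.
Proof. by rewrite !dotE !mxE; ring. Qed.

Lemma dotZr u t x : dot u (t *: x) = t * dot u x.
Proof. by rewrite !dotE !mxE; ring. Qed.

Lemma dotZl t u x : dot (t *: u) x = t * dot u x.
Proof. by rewrite !dotE !mxE; ring. Qed.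

Lemma dot0r u : dot u 0 = 0.
Proof. by rewrite dotE !mxE; ring. Qed.

Lemma dot_sumr u (k : nat) (S : {set 'I_k}) (c : 'I_k -> R) (g : 'I_k -> 'rV[R]_3) :
  dot u (\sum_(i in S) c i *: g i) = \sum_(i in S) c i * dot u (g i).
Proof.
rewrite (big_morph (dot u) (dotDr u) (dot0r u)).
by apply: eq_bigr => i _; rewrite dotZr.
Qed.

Lemma det3_rot a b c : det3 a b c = det3 b c a.
Proof. by rewrite !det3E; ring. Qed.

Lemma det3_swap a b c : det3 a b c = - det3 a c b.
Proof. by rewrite !det3E; ring. Qed.

Lemma det3_aba a b : det3 a b a = 0.
Proof. by rewrite det3E; ring. Qed.

Lemma det3_abb a b : det3 a b b = 0.
Proof. by rewrite det3E; ring. Qed.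

Lemma det3_cramer p x y z :
  det3 x y z *: p = det3 p y z *: x - det3 p x z *: y + det3 p x y *: z.
Proof.
by apply/rowP => j; rewrite !mxE !det3E; case: (ord3P j) => ->; ring.
Qed.

Lemma dot_det3_cramer f p x y z : det3 x y z * dot f p =
  det3 p y z * dot f x - det3 p x z * dot f y + det3 p x y * dot f z.
Proof. by rewrite -dotZr det3_cramer !dotE !mxE; ring. Qed.

Lemma det3_dot_proportional u a b c x : dot u a = 0 -> dot u b = 0 ->
  det3 a b x * dot u c = det3 a b c * dot u x.
Proof.
move=> ua ub; rewrite dot_det3_cramer ua ub !mulr0 subr0 add0r.
by rewrite det3_rot.
Qed.

Lemma det3_fan_trans f p x y z s : dot f p = 0 ->
  0 < dot f x -> 0 < dot f y -> 0 < dot f z ->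
  0 < s * det3 p x y -> 0 < s * det3 p y z -> 0 < s * det3 p x z.
Proof.
move=> fp fx fy fz pxy pyz.
have E : det3 p x z * dot f y = det3 p y z * dot f x + det3 p x y * dot f z.
  by rewrite dot_det3_cramer fp !det3E; ring.
rewrite -(pmulr_lgt0 _ fy) -mulrA E mulrDr.
by apply: addr_gt0; rewrite mulrA; apply: mulr_gt0.
Qed.

Lemma det3_degenerate a b f : (forall x, det3 a b x = 0) ->
  dot f a = 0 -> dot f b != 0 -> a = 0.
Proof.
move=> ab0 fa fb.
have ba x : det3 b a x = 0 by rewrite det3_rot det3_swap ab0 oppr0.
have ayz y z : det3 a y z = 0.
  by apply: (mulIf fb); rewrite mul0r dot_det3_cramer fa !ba; ring.
apply/rowP => j; rewrite mxE.
have := ayz (delta_mx 0 1) (delta_mx 0 2); have := ayz (delta_mx 0 2) (delta_mx 0 0).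
have := ayz (delta_mx 0 0) (delta_mx 0 1); rewrite !det3E !mxE /=.
by case: (ord3P j) => ->; lra.
Qed.

End Determinant.

Section Cone.
Variables (R : realType) (k : nat) (S : {set 'I_k}) (g : 'I_k -> 'rV[R]_3).

Lemma cone_gen i : i \in S -> cone S g (g i).
Proof.
move=> iS; exists (fun j => (j == i)%:R); split=> [j|]; first exact: ler0n.
rewrite (bigD1 i) //= eqxx scale1r big1 ?addr0 // => j /andP[_ /negbTE ->].
by rewrite scale0r.
Qed.

Lemma coneD x y : cone S g x -> cone S g y -> cone S g (x + y).
Proof.
move=> [c [c0 ->]] [d [d0 ->]]; exists (fun j => c j + d j); split.
  by move=> j; apply: addr_ge0.
by rewrite -big_split /=; apply: eq_bigr => j _; rewrite scalerDl.
Qed.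

Lemma coneZ t x : 0 <= t -> cone S g x -> cone S g (t *: x).
Proof.
move=> t0 [c [c0 ->]]; exists (fun j => t * c j); split.
  by move=> j; apply: mulr_ge0.
by rewrite scaler_sumr; apply: eq_bigr => j _; rewrite scalerA.
Qed.

Lemma cone_line y t : cone S g y -> cone S g (- y) -> cone S g (t *: y).
Proof.
move=> Cy CNy; have [t0|t0] := lerP 0 t; first exact: coneZ.
by rewrite -[t]opprK scaleNr -scalerN; apply: coneZ; rewrite // oppr_ge0 ltW.
Qed.

Lemma cone_opp_of_relation t y z :
  0 < t -> t *: y + z = 0 -> cone S g z -> cone S g (- y).
Proof.
move=> t0 tyz Cz; have -> : - y = t^-1 *: z.
  by rewrite -(addKr (t *: y) z) tyz addr0 scalerN scalerA mulVf ?gt_eqF ?scale1r.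
by apply: coneZ; rewrite // invr_ge0 ltW.
Qed.

(* Each x_i is minus a positive combination of the others, so the cone contains
   the lines through the basis x1, x2, x3. *)
Lemma cone_full_of_circuit x1 x2 x3 x4 a b c d :
  cone S g x1 -> cone S g x2 -> cone S g x3 -> cone S g x4 ->
  0 < a -> 0 < b -> 0 < c -> 0 < d ->
  a *: x1 + b *: x2 + c *: x3 + d *: x4 = 0 -> det3 x1 x2 x3 != 0 ->
  forall x, cone S g x.
Proof.
move=> C1 C2 C3 C4 a0 b0 c0 d0 rel D0 x.
have Cpos3 (y1 y2 y3 : 'rV[R]_3) (t1 t2 t3 : R) :
    cone S g y1 -> cone S g y2 -> cone S g y3 -> 0 < t1 -> 0 < t2 -> 0 < t3 ->
    cone S g (t1 *: y1 + t2 *: y2 + t3 *: y3).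
  move=> Cy1 Cy2 Cy3 /ltW t1_ge0 /ltW t2_ge0 /ltW t3_ge0.
  by do 2?apply: coneD; apply: coneZ.
have CN1 : cone S g (- x1).
  apply: (cone_opp_of_relation a0 _ (Cpos3 _ _ _ _ _ _ C2 C3 C4 b0 c0 d0)).
  by rewrite !addrA.
have CN2 : cone S g (- x2).
  apply: (cone_opp_of_relation b0 _ (Cpos3 _ _ _ _ _ _ C1 C3 C4 a0 c0 d0)).
  by rewrite -rel !addrA (addrC (b *: x2)).
have CN3 : cone S g (- x3).
  apply: (cone_opp_of_relation c0 _ (Cpos3 _ _ _ _ _ _ C1 C2 C4 a0 b0 d0)).
  by rewrite -rel !addrA (addrC (c *: x3)) (addrAC (a *: x1)).
set D := det3 x1 x2 x3.
have -> : x = (det3 x x2 x3 / D) *: x1 + (- (det3 x x1 x3 / D)) *: x2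
              + (det3 x x1 x2 / D) *: x3.
  apply: (scalerI D0); rewrite det3_cramer !scalerDr !scalerA mulrN.
  by rewrite !(mulrC D) !divfK // scaleNr.
by do 2?apply: coneD; apply: cone_line.
Qed.

End Cone.

Lemma cone_set0 (R : realType) (k : nat) (g : 'I_k -> 'rV[R]_3) x :
  cone set0 g x -> x = 0.
Proof. by move=> [c [_ ->]]; rewrite big_pred0 // => i; rewrite inE. Qed.

Lemma cone_separated_meet (R : realType) (k : nat) (S : {set 'I_k})
    (g : 'I_k -> 'rV[R]_3) u x :
  (forall i, i \in S -> dot u (g i) <= 0) ->
  (forall i, i \notin S -> 0 < dot u (g i)) ->
  cone S g x -> cone (~: S) g x -> x = 0.
Proof.
move=> uS uSC [c [c0 xc]] [d [d0 xd]].
have dS i : i \in ~: S -> 0 <= d i * dot u (g i).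
  by rewrite inE => iS; apply: mulr_ge0 => //; apply/ltW/uSC.
have ux0 : dot u x = 0.
  apply/eqP; rewrite eq_le {1}xc xd !dot_sumr sumr_ge0 // andbT.
  by apply: sumr_le0 => i iS; apply: mulr_ge0_le0 => //; apply: uS.
have := psumr_eq0P dS; rewrite -dot_sumr -xd => /(_ ux0) d0S.
rewrite xd big1 // => i iS; have ui : 0 < dot u (g i) by apply: uSC; rewrite -in_setC.
by move/eqP: (d0S i iS); rewrite mulf_eq0 (gt_eqF ui) orbF => /eqP->; rewrite scale0r.
Qed.

Section CyclicIndex.
Variable m : nat.
Local Notation k := m.+1.

Lemma inZpS j : ordS (inZp j : 'I_k) = inZp j.+1.
Proof. by apply/val_inj; rewrite /= -addn1 modnDml addn1. Qed.

Lemma ord_pred_inZpS j : ord_pred (inZp j.+1 : 'I_k) = inZp j.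
Proof. by rewrite -inZpS ordSK. Qed.

Lemma inZp_addn_eq a s t : (s < k)%N -> (t < k)%N ->
  (inZp (a + s) == inZp (a + t) :> 'I_k) = (s == t).
Proof. by move=> sk tk; rewrite -val_eqE /= eqn_modDl !modn_small. Qed.

Lemma inZpS_neq j : (0 < m)%N -> inZp j.+1 != inZp j :> 'I_k.
Proof. by move=> m0; rewrite -[j.+1]addn1 -{2}[j]addn0 inZp_addn_eq. Qed.

Lemma inZpSS_neq j : (1 < m)%N -> inZp j.+2 != inZp j :> 'I_k.
Proof. by move=> m1; rewrite -[j.+2]addn2 -{2}[j]addn0 inZp_addn_eq. Qed.

Lemma inZp_addn_onto a (i : 'I_k) : exists2 t, (t < k)%N & inZp (a + t) = i.
Proof.
exists ((i + (k - a %% k)) %% k)%N; first exact: ltn_pmod.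
apply/val_inj => /=; rewrite modnDmr -modnDml.
have /subnKC ak : (a %% k <= k)%N by apply/ltnW/ltn_pmod.
by rewrite addnCA ak modnDr modn_small.
Qed.

Lemma ord_pred_val (i : 'I_k) : (0 < i)%N -> ord_pred i = i.-1 :> nat.
Proof. by case: i => -[|i] //= ik _; rewrite modnDr modn_small // ltnW. Qed.

Lemma ord_pred_val0 (i : 'I_k) : i = 0%N :> nat -> ord_pred i = m :> nat.
Proof. by case: i => -[|i] //= *; rewrite modn_small. Qed.

End CyclicIndex.

Section Intervals.
Variables (m : nat) (Pi : {set 'I_m.+1}).

Lemma interval_start_exists : Pi != setT -> Pi != set0 ->
  exists2 a, a \in Pi & ord_pred a \notin Pi.
Proof.
move=> PiT Pi0; apply/exists_inP; apply: contraNT Pi0 => /exists_inPn noStart.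
have [j _ jPi] : exists2 j, j \in setT & j \notin Pi by apply/subsetPn; rewrite subTset.
have out t : inZp (j + t) \notin Pi.
  elim: t => [|t IH]; first by rewrite addn0 valZpK.
  by apply: contra IH => jt; rewrite -ord_pred_inZpS -addnS; apply/negbNE/noStart.
apply/eqP/setP => i; rewrite inE; have [t _ <-] := inZp_addn_onto j i.
exact/negbTE/out.
Qed.

Lemma single_interval_arc : ~~ (1 < num_intervals Pi)%N -> Pi != setT -> Pi != set0 ->
  exists a r, (0 < r < m.+1)%N /\
    forall t, (t < m.+1)%N -> (inZp (a + t) \in Pi) = (t < r)%N.
Proof.
move=> one PiT Pi0; have [a0 a0Pi a0start] := interval_start_exists PiT Pi0.
have start_eq i : i \in Pi -> ord_pred i \notin Pi -> i = a0.
  move=> iPi istart; apply/eqP; apply: contraNT one => ia0.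
  rewrite /num_intervals (negbTE PiT); apply/card_gt1P.
  by exists i, a0; rewrite !inE iPi istart a0Pi a0start.
have a0E : inZp (a0 + 0) = a0 by rewrite addn0 valZpK.
have down t s : (t < m.+1)%N -> inZp (a0 + t) \in Pi -> (s <= t)%N ->
    inZp (a0 + s) \in Pi.
  elim: t => [|t IH] tk tPi; first by rewrite leqn0 => /eqP->.
  have tPi' : inZp (a0 + t) \in Pi.
    apply: contraT => tout.
    have := start_eq _ tPi; rewrite addnS ord_pred_inZpS => /(_ tout) /eqP.
    by rewrite -addnS -{2}a0E inZp_addn_eq.
  by rewrite leq_eqVlt => /predU1P[->//|]; apply: IH => //; apply: ltnW.
have exOut : exists t, (t < m.+1)%N && (inZp (a0 + t) \notin Pi).
  have [j _ jPi] : exists2 j, j \in setT & j \notin Pi.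
    by apply/subsetPn; rewrite subTset.
  by have [t tk tj] := inZp_addn_onto a0 j; exists t; rewrite tk tj.
case: (ex_minnP exOut) => r /andP[rk rout] rmin.
exists a0, r; split.
  by rewrite rk andbT lt0n; apply: contraNneq rout => r0; rewrite r0 a0E.
move=> t tk; case: ltnP => [tr|rt].
  by apply: contraTT tr => tout; rewrite -leqNgt rmin // tk tout.
by apply: contraNF rout => tPi; apply: down tk tPi rt.
Qed.

Lemma alternating_quadruple : (1 < num_intervals Pi)%N ->
  exists (p0 p1 p2 p3 : 'I_m.+1) (b : bool),
    [/\ (p0 < p1)%N, (p1 < p2)%N & (p2 < p3)%N] /\
    [/\ (p0 \in Pi) = b, (p1 \in Pi) = ~~ b, (p2 \in Pi) = b & (p3 \in Pi) = ~~ b].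
Proof.
rewrite /num_intervals; case: eqP => [//|_] /card_gt1P[x [y [xS yS xy]]].
wlog xy_lt : x y xS yS xy / (x < y)%N.
  move=> lt_case; case: (ltngtP x y) => [|yx|/val_inj xy_eq]; first exact: lt_case.
    by apply: (lt_case y x) => //; rewrite eq_sym.
  by rewrite xy_eq eqxx in xy.
move: xS yS; rewrite !inE => /andP[xPi xstart] /andP[yPi ystart].
have neq i j : i \in Pi -> j \notin Pi -> i != j :> nat.
  by move=> iPi jPi; apply: contraNneq jPi => /val_inj <-.
have y_gt0 : (0 < y)%N by apply: leq_ltn_trans xy_lt.
have py := ord_pred_val y_gt0.
have x_py := neq _ _ xPi ystart.
have [x0|x_gt0] := posnP x.
- have px := ord_pred_val0 x0; have y_px := neq _ _ yPi xstart.
  exists x, (ord_pred y), y, (ord_pred x), true.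
  rewrite xPi yPi (negbTE xstart) (negbTE ystart); split=> //.
  by have yk := ltn_ord y; rewrite py px in x_py y_px *; split; lia.
- have px := ord_pred_val x_gt0.
  exists (ord_pred x), x, (ord_pred y), y, false.
  rewrite xPi yPi (negbTE xstart) (negbTE ystart); split=> //.
  by rewrite py px in x_py *; split; lia.
Qed.

End Intervals.

Lemma face_set_functional (R : realType) (k : nat) (g : 'I_k -> 'rV[R]_3)
    (S : {set 'I_k}) :
  face_set g S -> exists u, (forall i, i \in S -> dot u (g i) = 0) /\
                            (forall i, i \notin S -> 0 < dot u (g i)).
Proof.
move=> [u [u_ge0 u0]]; exists u; split=> [i /u0 //|i iS].
by rewrite lt_def u_ge0 andbT; apply: contra iS => /eqP/u0.
Qed.

Section CyclicPolygon.
Variables (R : realType) (m : nat) (v : 'I_m.+1 -> 'rV[R]_3).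
Hypothesis ray_face : forall i, face_set v [set i].
Hypothesis edge_face : forall i, i != ordS i -> face_set v [set i; ordS i].

Local Notation w j := (v (inZp j)).

Let orientation := det3 (w 0) (w 1) (w 2).

Lemma ray_functional a :
  exists f, dot f (v a) = 0 /\ forall j, j != a -> 0 < dot f (v j).
Proof.
have [f [f0 fpos]] := face_set_functional (ray_face a).
by exists f; split=> [|j ja]; [apply: f0; rewrite inE | apply: fpos; rewrite inE].
Qed.

Section Orientation.
Hypothesis m_gt1 : (1 < m)%N.

Lemma edge_functional i : exists e, [/\ dot e (w i) = 0, dot e (w i.+1) = 0 &
  forall j, j != inZp i -> j != inZp i.+1 -> 0 < dot e (v j)].
Proof.
have iS : inZp i != ordS (inZp i) :> 'I_m.+1.
  by rewrite inZpS eq_sym inZpS_neq // ltnW.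
have [e [e0 epos]] := face_set_functional (edge_face iS).
exists e; rewrite -inZpS; split.
- by apply: e0; rewrite !inE eqxx.
- by apply: e0; rewrite !inE eqxx orbT.
- by move=> j ji jSi; apply: epos; rewrite !inE negb_or ji jSi.
Qed.

Lemma orientation_neq0 : orientation != 0.
Proof.
apply/eqP => orientation_eq0.
have [e [e0 e1 epos]] := edge_functional 0.
have e2 : 0 < dot e (w 2).
  by apply: epos; [apply: inZpSS_neq | apply: inZpS_neq; apply: ltnW].
have flat x : det3 (w 0) (w 1) x = 0.
  apply: (mulIf (lt0r_neq0 e2)).
  by rewrite det3_dot_proportional // -/orientation orientation_eq0 !mul0r.
have [f [f0 fpos]] := ray_functional (inZp 0).
have [g [_ gpos]] := ray_functional (inZp 1).
have n10 : inZp 1 != inZp 0 :> 'I_m.+1 by apply: inZpS_neq; apply: ltnW.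
have w0 := det3_degenerate flat f0 (lt0r_neq0 (fpos _ n10)).
have g0 : 0 < dot g (w 0) by apply: gpos; rewrite eq_sym.
by rewrite w0 dot0r ltxx in g0.
Qed.

Lemma edge_det_sign i j0 j s :
  j0 != inZp i -> j0 != inZp i.+1 -> j != inZp i -> j != inZp i.+1 ->
  0 < s * det3 (w i) (w i.+1) (v j0) -> 0 < s * det3 (w i) (w i.+1) (v j).
Proof.
move=> j0i j0Si ji jSi pos0; have [e [e0 e1 epos]] := edge_functional i.
rewrite -(pmulr_lgt0 _ (epos _ j0i j0Si)) -mulrA det3_dot_proportional // mulrA.
exact: mulr_gt0 pos0 (epos _ ji jSi).
Qed.

Lemma orient_edge i j : j != inZp i -> j != inZp i.+1 ->
  0 < orientation * det3 (w i) (w i.+1) (v j).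
Proof.
have SSi_neq i' : inZp i'.+2 != inZp i' :> 'I_m.+1 := inZpSS_neq i' m_gt1.
have Si_neq i' : inZp i'.+1 != inZp i' :> 'I_m.+1 := inZpS_neq i' (ltnW m_gt1).
elim: i j => [|i IH] j ji jSi.
  apply: (@edge_det_sign 0 (inZp 2)) => //.
  by rewrite -expr2 lt_def sqrf_eq0 orientation_neq0 sqr_ge0.
apply: (@edge_det_sign i.+1 (inZp i)) => //; try by rewrite eq_sym.
by rewrite -det3_rot; apply: IH.
Qed.

Lemma orient_consecutive a t : (0 < t)%N -> (t < m)%N ->
  0 < orientation * det3 (w a) (w (a + t)) (w (a + t).+1).
Proof.
move=> t0 tm; have tk : (t < m.+1)%N by apply: ltnW.
rewrite det3_rot; apply: orient_edge.
  by rewrite -{1}[a]addn0 inZp_addn_eq // eq_sym -lt0n.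
by rewrite -addnS -{1}[a]addn0 inZp_addn_eq.
Qed.

Lemma orient_cyclic a s t : (0 < s)%N -> (s < t)%N -> (t < m.+1)%N ->
  0 < orientation * det3 (w a) (w (a + s)) (w (a + t)).
Proof.
move=> s0; elim: t => // t IH; rewrite ltnS leq_eqVlt => /predU1P[<-|st] tk.
  by rewrite addnS; apply: orient_consecutive.
have [f [f0 fpos]] := ray_functional (inZp a).
have fw u : (0 < u)%N -> (u < m.+1)%N -> 0 < dot f (w (a + u)).
  by move=> u0 uk; apply: fpos; rewrite -{2}[a]addn0 inZp_addn_eq // -lt0n.
apply: (det3_fan_trans f0 (y := w (a + t))); try (by apply: fw; lia).
  by apply: IH => //; apply: ltnW.
by rewrite addnS; apply: orient_consecutive; lia.
Qed.

Lemma orient_increasing (p q r : 'I_m.+1) : (p < q)%N -> (q < r)%N ->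
  0 < orientation * det3 (v p) (v q) (v r).
Proof.
move=> pq qr; have rk := ltn_ord r; have := @orient_cyclic p (q - p) (r - p).
by rewrite !subnKC ?valZpK; try lia; apply; lia.
Qed.

Lemma alternating_circuit (p0 p1 p2 p3 : 'I_m.+1) :
  (p0 < p1)%N -> (p1 < p2)%N -> (p2 < p3)%N ->
  exists a b c d : R, [/\ 0 < a, 0 < b, 0 < c & 0 < d] /\
    a *: v p0 + c *: v p2 = b *: v p1 + d *: v p3.
Proof.
move=> p01 p12 p23.
exists (orientation * det3 (v p1) (v p2) (v p3)),
  (orientation * det3 (v p0) (v p2) (v p3)),
  (orientation * det3 (v p0) (v p1) (v p3)),
  (orientation * det3 (v p0) (v p1) (v p2)).
split; first by split; apply: orient_increasing; lia.
rewrite -!scalerA -!scalerDr; congr (_ *: _).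
by rewrite det3_cramer addrAC subrK.
Qed.

End Orientation.

Lemma arc_separating_functional (Pi : {set 'I_m.+1}) a r : (0 < r < m.+1)%N ->
  (forall t, (t < m.+1)%N -> (inZp (a + t) \in Pi) = (t < r)%N) ->
  exists u, (forall i, i \in Pi -> dot u (v i) <= 0) /\
            (forall i, i \notin Pi -> 0 < dot u (v i)).
Proof.
case/andP=> r0 rk arc.
have [r1|r_gt1] := leqP r 1.
  have [f [f0 fpos]] := ray_functional (inZp a); exists f; split=> i.
    have [t tk <-] := inZp_addn_onto a i; rewrite arc // => tr.
    have -> : t = 0%N by lia.
    by rewrite addn0 f0.
  by move=> iPi; apply: fpos; apply: contraNneq iPi => ->; rewrite -[a]addn0 arc.
have m_gt1 : (1 < m)%N by lia.
exists (orientation *: cross (w a) (w (a + r.-1))); split=> i;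
  have [t tk <-] := inZp_addn_onto a i; rewrite arc // dotZl -/(det3 _ _ _).
- move=> tr; have [->|t0] := posnP t; first by rewrite addn0 det3_aba mulr0.
  have [->|tr'] := eqVneq t r.-1; first by rewrite det3_abb mulr0.
  by rewrite det3_swap mulrN oppr_le0 ltW // orient_cyclic //; lia.
- by rewrite -leqNgt => rt; apply: orient_cyclic; lia.
Qed.

Lemma alternating_cones_meet (S : {set 'I_m.+1}) (p0 p1 p2 p3 : 'I_m.+1) (b : bool) :
  (p0 < p1)%N -> (p1 < p2)%N -> (p2 < p3)%N ->
  (p0 \in S) = b -> (p1 \in S) = ~~ b -> (p2 \in S) = b -> (p3 \in S) = ~~ b ->
  exists x, x != 0 /\ cone S v x /\ cone (~: S) v x.
Proof.
move=> p01 p12 p23 S0 S1 S2 S3; have m_gt1 : (1 < m)%N by have := ltn_ord p3; lia.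
have [a [b' [c [d [[a0 b0 c0 d0] rel]]]]] := alternating_circuit m_gt1 p01 p12 p23.
exists (a *: v p0 + c *: v p2); split.
  have [f [_ fpos]] := ray_functional p1.
  have fx : 0 < dot f (a *: v p0 + c *: v p2).
    rewrite dotDr !dotZr; apply: addr_gt0; apply: mulr_gt0; rewrite // fpos //.
      by apply: contraTneq p01 => ->; rewrite ltnn.
    by apply: contraTneq p12 => ->; rewrite ltnn.
  by apply: contraTneq fx => ->; rewrite dot0r ltxx.
case: b S0 S1 S2 S3 => S0 S1 S2 S3;
  [split; last rewrite rel | split; first rewrite rel];
  by apply: coneD; apply: coneZ; rewrite ?ltW //; apply: cone_gen;
     rewrite ?inE ?S0 ?S1 ?S2 ?S3.
Qed.

Lemma alternating_signed_cone_full (S : {set 'I_m.+1}) (p0 p1 p2 p3 : 'I_m.+1)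
    (b : bool) :
  (p0 < p1)%N -> (p1 < p2)%N -> (p2 < p3)%N ->
  (p0 \in S) = b -> (p1 \in S) = ~~ b -> (p2 \in S) = b -> (p3 \in S) = ~~ b ->
  forall x, cone setT (fun i => if i \in S then - v i else v i) x.
Proof.
move=> p01 p12 p23 S0 S1 S2 S3; have m_gt1 : (1 < m)%N by have := ltn_ord p3; lia.
have [a [b' [c [d [[a0 b0 c0 d0] rel]]]]] := alternating_circuit m_gt1 p01 p12 p23.
have D0 : det3 (v p0) (v p1) (v p2) != 0.
  by apply: contraTneq (orient_increasing m_gt1 p01 p12) => ->; rewrite mulr0 ltxx.
set g := fun i => _.
apply: (cone_full_of_circuit (x1 := g p0) (x2 := g p1) (x3 := g p2) (x4 := g p3)
  _ _ _ _ a0 b0 c0 d0); try by apply: cone_gen; rewrite inE.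
all: rewrite /g S0 S1 S2 ?S3.
- move/rowP: rel => rel; apply/rowP => j; move: (rel j).
  by case: b {S0 S1 S2 S3}; rewrite /= ?mxE; lra.
- by case: b {S0 S1 S2 S3}; move: D0; rewrite /= !det3E !mxE;
    apply: contraNneq => ?; lra.
Qed.

End CyclicPolygon.

Theorem mainTheorem9 (R : realType) (k : nat) (n : 'I_k -> 'rV[int]_3)
  (Pi : {set 'I_k}) :
  cyclic_ray_data R n ->
  ((exists x : 'rV[R]_3, x != 0 /\
       cone Pi (fun i => realize R (n i)) x /\
       cone (~: Pi) (fun i => realize R (n i)) x)
     <-> (1 < num_intervals Pi)%N) /\
  ((1 < num_intervals Pi)%N ->
     forall x : 'rV[R]_3, cone setT (signed_gens R n Pi) x).
Proof.
move=> [_ [_ [_ [rays edges]]]].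
case: k n Pi rays edges => [|m] n Pi rays edges.
  have -> : Pi = setT by apply/setP => -[].
  rewrite /num_intervals eqxx; split=> //; split=> // -[x [x0 [[c [_ xE]] _]]].
  by rewrite xE big_pred0 ?eqxx // in x0 => -[].
set v := fun i => realize R (n i).
have edge_face i : i != ordS i -> face_set v [set i; ordS i] by move=> /edges->; left.
have alternating : (1 < num_intervals Pi)%N ->
    (exists x, x != 0 /\ cone Pi v x /\ cone (~: Pi) v x) /\
    (forall x, cone setT (signed_gens R n Pi) x).
  move=> gt1; have [p0 [p1 [p2 [p3 [b [[p01 p12 p23] [S0 S1 S2 S3]]]]]]] :=
    alternating_quadruple gt1.
  split; first exact: (alternating_cones_meet rays edge_face p01 p12 p23 S0 S1 S2 S3).
  exact: (alternating_signed_cone_full rays edge_face p01 p12 p23 S0 S1 S2 S3).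
split; [split=> [[x [x0 [xPi xPiC]]]|/alternating[]//] | by move=> /alternating[]].
apply: contraTT x0 => one; rewrite negbK; apply/eqP.
have [PiT|PiT] := eqVneq Pi setT.
  by rewrite PiT setCT in xPiC; exact: cone_set0 xPiC.
have [Pi0|Pi0] := eqVneq Pi set0; first by rewrite Pi0 in xPi; exact: cone_set0 xPi.
have [a [r [r_bnd arc]]] := single_interval_arc one PiT Pi0.
have [u [uPi uPiC]] := arc_separating_functional rays edge_face r_bnd arc.
exact: cone_separated_meet uPi uPiC xPi xPiC.
Qed.
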